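(* Let $\mathcal U$ be an unbalanced critical update family and $\alpha=\alpha(\mathcal U)$. Then there exists $u^*\in S^1$ such that $\min\{\alpha(u^* ),\alpha(-u^* )\}\ge\alpha+1$.
   Context: An update family is a finite collection $\mathcal U$ of finite subsets of $\mathbb Z^2\setminus\{0\}$ acting by $A_{t+1}=A_t\cup\{x:x+X\subset A_t\text{ for some }X\in\mathcal U\}$, closure $[A]=\bigcup_tA_t$. $\mathbb H_u=\{x\in\mathbb Z^2:\langle x,u\rangle<0\}$, $u$ stable if $[\mathbb H_u]=\mathbb H_u$, $\mathcal S$ the stable set. For rational $u$, $\ell_u=\{x:\langle x,u\rangle=0\}$, $\ell_u^\pm$ = origin plus sites of $\ell_u$ right/left of the origin looking in direction $u$; $\alpha^\pm(u)$ = minimal $|Z|$ with $[\mathbb H_u\cup Z]\cap\ell_u^\pm$ infinite; $\alpha(u)=\min\{\alpha^+,\alpha^-\}$ if both finite, else $\infty$ (irrational $u$: $\infty$ if stable, $0$ otherwise). $\alpha(\mathcal U)=\min_C\sup_{u\in C}\alpha(u)$ over open semicircles $C$. Critical: some semicircle has finite intersection with $\mathcal S$ and every open semicircle meets $\mathcal S$. A critical $\mathcal U$ is balanced if some closed semicircle $C$ has $\alpha(u)\le\alpha(\mathcal U)$ for all $u\in C$, and unbalanced otherwise. *)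

From Stdlib Require Import Reals ZArith List Classical ClassicalEpsilon.
Import ListNotations.
Open Scope R_scope.

Definition site := (Z * Z)%type.
Definition siteset := site -> Prop.
Definition sadd (x y : site) : site := ((fst x + fst y)%Z, (snd x + snd y)%Z).

Definition update_family (U : list (list site)) : Prop :=
  forall X, In X U -> ~ In (0%Z, 0%Z) X.

Definition step (U : list (list site)) (A : siteset) : siteset :=
  fun x => A x \/ exists X, In X U /\ forall y, In y X -> A (sadd x y).

Fixpoint iter_step (U : list (list site)) (A : siteset) (t : nat) : siteset :=
  match t with
  | O => A
  | S t' => step U (iter_step U A t')
  end.

Definition closure (U : list (list site)) (A : siteset) : siteset :=
  fun x => exists t, iter_step U A t x.

Definition set_union (A B : siteset) : siteset := fun x => A x \/ B x.
Definition set_of_list (l : list site) : siteset := fun x => In x l.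
Definition set_finite (A : siteset) : Prop := exists l : list site, forall x, A x -> In x l.
Definition set_infinite (A : siteset) : Prop := ~ set_finite A.

Definition dir := (R * R)%type.
Definition on_circle (u : dir) : Prop := fst u * fst u + snd u * snd u = 1.
Definition dneg (u : dir) : dir := (- fst u, - snd u).
Definition dot (u v : dir) : R := fst u * fst v + snd u * snd v.

Definition ip (x : site) (u : dir) : R := IZR (fst x) * fst u + IZR (snd x) * snd u.

Definition halfplane (u : dir) : siteset := fun x => ip x u < 0.

Definition stable (U : list (list site)) (u : dir) : Prop :=
  forall x, closure U (halfplane u) x <-> halfplane u x.

Definition rational_dir (u : dir) : Prop :=
  exists p q : Z, (p <> 0%Z \/ q <> 0%Z) /\ IZR p * fst u + IZR q * snd u = 0.

(** l_u, and l_u^+ / l_u^- : origin together with the sites of l_u to the right /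
    left of the origin when looking in direction u.  "Right" of direction (u1,u2)
    is the direction (u2,-u1). *)
Definition line (u : dir) : siteset := fun x => ip x u = 0.
Definition right_of (u : dir) : dir := (snd u, - fst u).
Definition line_plus (u : dir) : siteset := fun x => line u x /\ 0 <= ip x (right_of u).
Definition line_minus (u : dir) : siteset := fun x => line u x /\ ip x (right_of u) <= 0.

Inductive enat := Fin (n : nat) | Inf.

Definition ele (a b : enat) : Prop :=
  match a, b with
  | _, Inf => True
  | Inf, Fin _ => False
  | Fin m, Fin n => (m <= n)%nat
  end.

Definition esucc (a : enat) : enat :=
  match a with Fin n => Fin (S n) | Inf => Inf end.

Definition emin (a b : enat) : enat :=
  match a, b with
  | Fin m, Fin n => Fin (Nat.min m n)
  | Fin m, Inf => Fin m
  | Inf, b => b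
  end.

Definition least (P : nat -> Prop) : enat :=
  match excluded_middle_informative (exists n, P n) with
  | left _ => Fin (epsilon (inhabits 0%nat) (fun n => P n /\ forall m, P m -> (n <= m)%nat))
  | right _ => Inf
  end.

Definition alpha_side (U : list (list site)) (L : siteset) (u : dir) : enat :=
  least (fun k => exists Z : list site, NoDup Z /\ length Z = k /\
           set_infinite (fun x => closure U (set_union (halfplane u) (set_of_list Z)) x /\ L x)).

Definition alpha_plus (U : list (list site)) (u : dir) : enat :=
  alpha_side U (line_plus u) u.
Definition alpha_minus (U : list (list site)) (u : dir) : enat :=
  alpha_side U (line_minus u) u.

Definition alpha (U : list (list site)) (u : dir) : enat :=
  if excluded_middle_informative (rational_dir u) then
    match alpha_plus U u, alpha_minus U u with
    | Fin a, Fin b => Fin (Nat.min a b)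
    | _, _ => Inf
    end
  else if excluded_middle_informative (stable U u) then Inf else Fin 0.

Definition open_semicircle (v : dir) (u : dir) : Prop := on_circle u /\ dot u v > 0.
Definition closed_semicircle (v : dir) (u : dir) : Prop := on_circle u /\ dot u v >= 0.

(** alpha(U) = min over open semicircles C of sup_{u in C} alpha(u), written as
    the least k such that some open semicircle C has alpha(u) <= k for all u in C
    (∞ if there is no such k). *)
Definition alpha_fam (U : list (list site)) : enat :=
  least (fun k => exists v, on_circle v /\
           forall u, open_semicircle v u -> ele (alpha U u) (Fin k)).

Definition critical (U : list (list site)) : Prop :=
  (exists v, on_circle v /\
     exists l : list dir, forall u, open_semicircle v u -> stable U u -> In u l) /\
  (forall v, on_circle v -> exists u, open_semicircle v u /\ stable U u).

Definition balanced (U : list (list site)) : Prop :=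
  exists v, on_circle v /\
    forall u, closed_semicircle v u -> ele (alpha U u) (alpha_fam U).

Definition unbalanced (U : list (list site)) : Prop := ~ balanced U.

From Stdlib Require Import Reals ZArith List Classical ClassicalEpsilon
  FunctionalExtensionality PropExtensionality Lra Lia Psatz.
Import ListNotations.
Open Scope R_scope.

(* Let the open semicircle centred at [v] attain [alpha(U) = k] and let [u], [-u] be its
   endpoints.  If [alpha(u) <= k], then [u] is not blocked on the side of [v]: some rule
   [X] of [U] lies in [H_u] except for sites of [l_u] strictly on the side of [v].  Tilting
   the semicircle slightly towards [u] gives a closed semicircle on which [alpha <= k]:
   old directions and [u] itself satisfy it by assumption, and every new direction [t]
   beyond [u] has [X] inside [H_t], so [alpha(t) = 0].  This contradicts unbalancedness,
   so [alpha(u) >= k + 1], and symmetrically [alpha(-u) >= k + 1]. *)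

Lemma ex_min (P : nat -> Prop) n :
  P n -> exists m, P m /\ forall k, P k -> (m <= k)%nat.
Proof.
  induction n as [n IH] using (well_founded_induction Wf_nat.lt_wf); intros Hn.
  destruct (classic (exists k, P k /\ (k < n)%nat)) as [[k [Hk Hlt]]|Hno].
  - exact (IH k Hlt Hk).
  - exists n; split; [exact Hn|].
    intros k Hk; destruct (Nat.le_gt_cases n k); [assumption|exfalso; eauto].
Qed.

Lemma least_spec (P : nat -> Prop) n :
  P n -> exists m, least P = Fin m /\ P m /\ forall k, P k -> (m <= k)%nat.
Proof.
  intros Hn; unfold least.
  destruct (excluded_middle_informative _) as [_|Hno]; [|exfalso; eauto].
  eexists; split; [reflexivity|].
  destruct (ex_min P n Hn) as [m Hm].
  exact (epsilon_spec (inhabits 0%nat)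
           (fun m => P m /\ forall k, P k -> (m <= k)%nat) (ex_intro _ m Hm)).
Qed.

Lemma least_fin P k : least P = Fin k -> P k.
Proof.
  intros Hk; destruct (classic (exists n, P n)) as [[n Hn]|Hno].
  - destruct (least_spec P n Hn) as [m [Hm [HPm _]]]; congruence.
  - unfold least in Hk; destruct (excluded_middle_informative _); [contradiction|discriminate].
Qed.

Lemma least_zero P : P 0%nat -> least P = Fin 0.
Proof.
  intros H0; destruct (least_spec P 0 H0) as [m [Hm [_ Hmin]]].
  specialize (Hmin 0%nat H0); replace m with 0%nat in Hm by lia; exact Hm.
Qed.

Lemma least_inf P : ~ (exists n, P n) -> least P = Inf.
Proof.
  intros H; unfold least.
  destruct (excluded_middle_informative _); [contradiction|reflexivity].
Qed.

Lemma emin_ge n a b : ele (Fin n) a -> ele (Fin n) b -> ele (Fin n) (emin a b).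
Proof. destruct a, b; simpl; auto; intros; lia. Qed.

Lemma uniform_scale_below (l : list site) (F G : site -> R) :
  exists e, 0 < e /\ forall y, In y l -> 0 < G y -> e * Rabs (F y) < G y.
Proof.
  induction l as [|a l [e [He H]]].
  - exists 1; split; [lra|]; intros y [].
  - destruct (Rlt_dec 0 (G a)) as [Ha|Ha].
    + set (ea := G a / (Rabs (F a) + 1)).
      assert (Hpos : 0 < Rabs (F a) + 1) by (pose proof (Rabs_pos (F a)); lra).
      assert (Hea : ea * Rabs (F a) < G a).
      { unfold ea; apply (Rmult_lt_reg_r (Rabs (F a) + 1)); [exact Hpos|].
        field_simplify; [nra | lra]. }
      assert (Hea0 : 0 < ea) by (apply Rdiv_lt_0_compat; lra).
      exists (Rmin e ea); split; [apply Rmin_glb_lt; assumption|].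
      intros y Hy Hy0; pose proof (Rabs_pos (F y)); destruct Hy as [<-|Hy].
      * pose proof (Rmin_r e ea); nra.
      * pose proof (Rmin_l e ea); specialize (H y Hy Hy0); nra.
    + exists e; split; [exact He|].
      intros y [<-|Hy] Hy0; [contradiction|auto].
Qed.

Lemma list_upper_bound (l : list site) (f : site -> R) :
  exists C, forall z, In z l -> f z < C.
Proof.
  induction l as [|a l [C HC]].
  - exists 0; intros z [].
  - exists (Rmax C (f a) + 1); intros z [<-|Hz].
    + pose proof (Rmax_r C (f a)); lra.
    + specialize (HC z Hz); pose proof (Rmax_l C (f a)); lra.
Qed.

Definition orthonormal (u w : dir) : Prop := on_circle u /\ on_circle w /\ dot u w = 0.

Definition dcomb (a : R) (u : dir) (b : R) (w : dir) : dir :=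
  (a * fst u + b * fst w, a * snd u + b * snd w).

Lemma dot_comm u w : dot u w = dot w u.
Proof. unfold dot; ring. Qed.

Lemma dot_dcomb t a u b w : dot t (dcomb a u b w) = a * dot t u + b * dot t w.
Proof. unfold dot, dcomb; simpl; ring. Qed.

Lemma orthonormal_sym u w : orthonormal u w -> orthonormal w u.
Proof. intros [Hu [Hw Huw]]; repeat split; try assumption; rewrite dot_comm; exact Huw. Qed.

Lemma orthonormal_dneg_r u w : orthonormal u w -> orthonormal u (dneg w).
Proof.
  unfold orthonormal, on_circle, dot, dneg; simpl; intros [Hu [Hw Huw]].
  repeat split; [exact Hu|lra|lra].
Qed.

Lemma orthonormal_right_of u : on_circle u -> orthonormal u (right_of u).
Proof. unfold orthonormal, on_circle, dot, right_of; simpl; intros Hu; repeat split; lra. Qed.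

Lemma orthonormal_cases u w :
  orthonormal u w -> w = right_of u \/ w = dneg (right_of u).
Proof.
  destruct u as [u1 u2], w as [w1 w2].
  unfold orthonormal, on_circle, dot, right_of, dneg; simpl; intros [Hu [Hw Huw]].
  set (l := w1 * u2 - w2 * u1).
  assert (E1 : w1 = l * u2).
  { assert (E : w1 - l * u2 = u1 * (u1 * w1 + u2 * w2) + w1 * (1 - (u1 * u1 + u2 * u2)))
      by (unfold l; ring).
    rewrite Huw, Hu in E; lra. }
  assert (E2 : w2 = - (l * u1)).
  { assert (E : w2 + l * u1 = u2 * (u1 * w1 + u2 * w2) + w2 * (1 - (u1 * u1 + u2 * u2)))
      by (unfold l; ring).
    rewrite Huw, Hu in E; lra. }
  assert (Hl : (l - 1) * (l + 1) = 0).
  { assert (E : w1 * w1 + w2 * w2 = l * l * (u1 * u1 + u2 * u2)) by (rewrite E1, E2; ring).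
    rewrite Hw, Hu in E; nra. }
  apply Rmult_integral in Hl as [Hl|Hl]; [left|right];
    [replace l with 1 in E1, E2 by lra | replace l with (-1) in E1, E2 by lra];
    rewrite E1, E2; f_equal; ring.
Qed.

Lemma orthonormal_expand u w t : orthonormal u w -> t = dcomb (dot t u) u (dot t w) w.
Proof.
  intros Huw; pose proof Huw as [Hu _].
  destruct (orthonormal_cases u w Huw) as [->| ->];
    destruct t as [t1 t2], u as [u1 u2];
    unfold dcomb, dot, right_of, dneg, on_circle in *; simpl in *;
    f_equal; [transitivity (t1 * (u1 * u1 + u2 * u2)) | transitivity (t2 * (u1 * u1 + u2 * u2))
             | transitivity (t1 * (u1 * u1 + u2 * u2)) | transitivity (t2 * (u1 * u1 + u2 * u2))];
    try (rewrite Hu; ring); ring.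
Qed.

Lemma dot_expand u w t z : orthonormal u w -> dot z t = dot t u * dot z u + dot t w * dot z w.
Proof.
  intros Huw; transitivity (dot z (dcomb (dot t u) u (dot t w) w)).
  - f_equal; apply orthonormal_expand; exact Huw.
  - apply dot_dcomb.
Qed.

Lemma parseval u w t : orthonormal u w -> dot t t = dot t u ^ 2 + dot t w ^ 2.
Proof. intros Huw; rewrite (dot_expand u w t t Huw), (dot_comm t u), (dot_comm t w); ring. Qed.

Lemma normalize_dir z :
  0 < dot z z -> exists v, on_circle v /\ forall t, dot t v >= 0 <-> dot t z >= 0.
Proof.
  intros Hz; set (c := / sqrt (dot z z)).
  assert (Hc : 0 < c) by (apply Rinv_0_lt_compat, sqrt_lt_R0; exact Hz).
  assert (Hc2 : c * c * dot z z = 1).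
  { unfold c; rewrite <- Rinv_mult, sqrt_sqrt by lra; field; lra. }
  exists (dcomb c z 0 z); split.
  - change (dot (dcomb c z 0 z) (dcomb c z 0 z) = 1).
    rewrite !dot_dcomb, !(dot_comm _ z), !dot_dcomb; lra.
  - intros t; rewrite dot_dcomb; split; intros H; nra.
Qed.

Definition vec (x : site) : dir := (IZR (fst x), IZR (snd x)).

Definition sqnorm (x : site) : R := dot (vec x) (vec x).

Lemma ip_dot x u : ip x u = dot (vec x) u.
Proof. reflexivity. Qed.

Lemma ip_sadd x y u : ip (sadd x y) u = ip x u + ip y u.
Proof. destruct x, y; unfold ip, sadd; simpl; rewrite !plus_IZR; ring. Qed.

Lemma ip_scale (n : Z) x u : ip ((n * fst x)%Z, (n * snd x)%Z) u = IZR n * ip x u.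
Proof. unfold ip; simpl; rewrite !mult_IZR; ring. Qed.

Lemma ip_dneg x u : ip x (dneg u) = - ip x u.
Proof. unfold ip, dneg; simpl; ring. Qed.

Lemma ip_dcomb x a u b w : ip x (dcomb a u b w) = a * ip x u + b * ip x w.
Proof. rewrite !ip_dot; apply dot_dcomb. Qed.

Lemma finite_mono (A B : siteset) : set_finite B -> (forall x, A x -> B x) -> set_finite A.
Proof. intros [l Hl] HAB; exists l; auto. Qed.

Lemma infinite_mono (A B : siteset) : set_infinite A -> (forall x, A x -> B x) -> set_infinite B.
Proof. intros HA HAB HB; exact (HA (finite_mono A B HB HAB)). Qed.

Lemma sqnorm_bounded_finite C : set_finite (fun x => sqnorm x <= C).
Proof.
  destruct (archimed C) as [HN _]; set (N := up C) in *.
  set (zs := map (fun n => (Z.of_nat n - N)%Z) (seq 0 (Z.to_nat (2 * N + 1)))).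
  assert (Hzs : forall z, (z * z < N)%Z -> In z zs).
  { intros z Hz; unfold zs; apply in_map_iff; exists (Z.to_nat (z + N)); split.
    - rewrite Z2Nat.id by nia; lia.
    - apply in_seq; nia. }
  exists (list_prod zs zs); intros [x1 x2] Hx; unfold sqnorm, vec, dot in Hx; simpl in Hx.
  apply in_prod; apply Hzs, lt_IZR; rewrite mult_IZR; nra.
Qed.

Lemma finite_sqnorm_bounded A : set_finite A -> exists C, forall x, A x -> sqnorm x < C.
Proof.
  intros [l Hl]; destruct (list_upper_bound l sqnorm) as [C HC].
  exists C; auto.
Qed.

Lemma multiples_infinite (A : siteset) p :
  p <> (0, 0)%Z -> (forall n, (0 <= n)%Z -> A ((n * fst p)%Z, (n * snd p)%Z)) ->
  set_infinite A.
Proof.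
  intros Hp HA Hfin; destruct (finite_sqnorm_bounded A Hfin) as [C HC].
  destruct (archimed C) as [HN _]; set (m := Z.max 1 (up C)).
  specialize (HC _ (HA m ltac:(lia))).
  assert (Hm : (m <= m * fst p * (m * fst p) + m * snd p * (m * snd p))%Z).
  { assert (Hm1 : (1 <= m)%Z) by lia.
    destruct p as [p1 p2]; simpl.
    assert (Hsq : (1 <= p1 * p1 + p2 * p2)%Z)
      by (destruct (Z.eq_dec p1 0), (Z.eq_dec p2 0); subst; [easy|nia..]).
    nia. }
  apply IZR_le in Hm; rewrite plus_IZR, !mult_IZR in Hm.
  assert (IZR (up C) <= IZR m) by (apply IZR_le; lia).
  unfold sqnorm, vec, dot in HC; simpl in HC; rewrite !mult_IZR in HC; lra.
Qed.

Definition closed_set (U : list (list site)) (A : siteset) : Prop :=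
  forall x, ~ A x -> forall X, In X U -> exists y, In y X /\ ~ A (sadd x y).

Lemma closure_minimal U (B A : siteset) :
  (forall x, B x -> A x) -> closed_set U A -> forall x, closure U B x -> A x.
Proof.
  intros HBA HA x [t Ht]; revert x Ht; induction t as [|t IH]; simpl; intros x Ht.
  - auto.
  - destruct Ht as [Ht|[X [HX Hall]]]; [auto|].
    apply NNPP; intros Hx; destruct (HA x Hx X HX) as [y [Hy Hn]].
    exact (Hn (IH _ (Hall y Hy))).
Qed.

Lemma line_in_closure U X u (B : siteset) x :
  In X U -> (forall y, In y X -> ip y u < 0) -> (forall z, halfplane u z -> B z) ->
  line u x -> closure U B x.
Proof.
  intros HXU HX HB Hx; exists 1%nat; right; exists X; split; [exact HXU|].
  intros y Hy; apply HB; unfold halfplane; rewrite ip_sadd, Hx.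
  specialize (HX y Hy); lra.
Qed.

Definition ray (u w : dir) : siteset := fun x => line u x /\ 0 <= ip x w.

Lemma line_plus_ray u : line_plus u = ray u (right_of u).
Proof. reflexivity. Qed.

Lemma line_minus_ray u : line_minus u = ray u (dneg (right_of u)).
Proof.
  apply functional_extensionality; intros x; apply propositional_extensionality.
  unfold line_minus, ray; rewrite ip_dneg; split; intros [H1 H2]; split; [exact H1|lra|exact H1|lra].
Qed.

Lemma ray_infinite u w : rational_dir u -> set_infinite (ray u w).
Proof.
  intros [p [q [Hpq Hline]]].
  assert (Hp : line u (p, q)) by exact Hline.
  assert (Hmult : forall x, x <> (0, 0)%Z -> line u x -> 0 <= ip x w -> set_infinite (ray u w)).
  { intros x Hx Hxl Hxw; apply (multiples_infinite _ x Hx); intros n Hn; split.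
    - unfold line; rewrite ip_scale, Hxl; ring.
    - rewrite ip_scale; apply Rmult_le_pos; [apply IZR_le|]; assumption. }
  destruct (Rle_or_lt 0 (ip (p, q) w)) as [Hw|Hw].
  - apply (Hmult (p, q)); [intros Heq; apply pair_equal_spec in Heq; lia|exact Hp|exact Hw].
  - apply (Hmult ((-1 * p)%Z, (-1 * q)%Z)); [intros Heq; apply pair_equal_spec in Heq; lia| |].
    + unfold line; rewrite (ip_scale _ (p, q)), Hp; ring.
    + rewrite (ip_scale _ (p, q)); lra.
Qed.

Lemma alpha_side_ray_zero U X u w :
  rational_dir u -> In X U -> (forall y, In y X -> ip y u < 0) ->
  alpha_side U (ray u w) u = Fin 0.
Proof.
  intros Hr HXU HX; apply least_zero; exists []; repeat split; [constructor|].
  apply (infinite_mono _ _ (ray_infinite u w Hr)); intros x Hx; split; [|exact Hx].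
  apply (line_in_closure U X u); [exact HXU|exact HX|left; assumption|apply Hx].
Qed.

Lemma closed_tilted_halfplane U u u' C :
  (forall X, In X U -> exists y, In y X /\ 0 <= ip y u /\ 0 <= ip y u') ->
  closed_set U (fun x => ip x u < 0 \/ ip x u' < C).
Proof.
  intros HU x Hx X HX; destruct (HU X HX) as [y [Hy [H1 H2]]]; exists y; split; [exact Hy|].
  rewrite !ip_sadd; lra.
Qed.

(* The halfplane [ip x u' < C], with [u'] tilted from [u] towards the ray, is closed and
   contains [H_u ∪ Z]; it meets the ray in a bounded set. *)
Lemma alpha_side_ray_inf U u w :
  orthonormal u w ->
  (forall X, In X U -> exists y, In y X /\ (0 < ip y u \/ ray u w y)) ->
  alpha_side U (ray u w) u = Inf.
Proof.
  intros Huw HU; apply least_inf; intros [_ [Z [_ [_ Hinf]]]]; apply Hinf.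
  destruct (uniform_scale_below (concat U) (fun y => ip y w) (fun y => ip y u))
    as [e [He Hsmall]].
  set (u' := dcomb 1 u e w).
  destruct (list_upper_bound Z (fun z => ip z u')) as [C HC].
  assert (Hcl : forall x, closure U (set_union (halfplane u) (set_of_list Z)) x ->
                          ip x u < 0 \/ ip x u' < C).
  { apply closure_minimal; [intros x [Hx|Hx]; [left|right; apply HC]; assumption|].
    apply closed_tilted_halfplane; intros X HX; destruct (HU X HX) as [y [Hy Hyu]].
    exists y; split; [exact Hy|]; unfold u'; rewrite ip_dcomb.
    destruct Hyu as [Hpos|[Hline Hw]].
    - assert (Hin : In y (concat U)) by (apply in_concat; eauto).
      specialize (Hsmall y Hin Hpos); simpl in Hsmall.
      pose proof (Rle_abs (- ip y w)); rewrite Rabs_Ropp in *; nra.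
    - unfold line in Hline; rewrite Hline; nra. }
  apply (finite_mono _ _ (sqnorm_bounded_finite ((C / e) ^ 2))).
  intros x [Hx [Hline Hw]]; unfold line in Hline.
  destruct (Hcl x Hx) as [Hlt|Hlt]; [lra|].
  unfold u' in Hlt; rewrite ip_dcomb, Hline in Hlt.
  assert (Hb : ip x w < C / e) by (apply (Rmult_lt_reg_l e); [lra|]; field_simplify; lra).
  unfold sqnorm; rewrite (parseval u w (vec x) Huw), <- !ip_dot, Hline; nra.
Qed.

Lemma alpha_zero U X u :
  on_circle u -> In X U -> (forall y, In y X -> ip y u < 0) -> alpha U u = Fin 0.
Proof.
  intros Hu HXU HX; unfold alpha.
  destruct (excluded_middle_informative (rational_dir u)) as [Hr|Hr].
  - unfold alpha_plus, alpha_minus; rewrite line_plus_ray, line_minus_ray.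
    rewrite !(alpha_side_ray_zero U X u); auto.
  - destruct (excluded_middle_informative (stable U u)) as [Hst|]; [exfalso|reflexivity].
    assert (H0 : closure U (halfplane u) (0, 0)%Z)
      by (apply (line_in_closure U X u); auto; unfold line, ip; simpl; ring).
    apply Hst in H0; unfold halfplane, ip in H0; simpl in H0; lra.
Qed.

Lemma alpha_inf U u w :
  orthonormal u w ->
  (forall X, In X U -> exists y, In y X /\ (0 < ip y u \/ ray u w y)) ->
  alpha U u = Inf.
Proof.
  intros Huw HU; unfold alpha.
  destruct (excluded_middle_informative (rational_dir u)) as [Hr|Hr].
  - unfold alpha_plus, alpha_minus; rewrite line_plus_ray, line_minus_ray.
    destruct (orthonormal_cases u w Huw) as [<-|<-];
      rewrite (alpha_side_ray_inf U u w Huw HU);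
      [reflexivity|destruct (alpha_side _ _ _); reflexivity].
  - destruct (excluded_middle_informative (stable U u)) as [|Hst]; [reflexivity|exfalso].
    apply Hst; intros x; split; [|intros Hx; exists 0%nat; exact Hx].
    apply closure_minimal; [auto|]; intros z Hz X HX.
    destruct (HU X HX) as [y [Hy Hyu]]; exists y; split; [exact Hy|].
    unfold halfplane in *; rewrite ip_sadd; destruct Hyu as [Hyu|[Hyu _]];
      [|unfold line in Hyu]; lra.
Qed.

Lemma alpha_finite_rule U u w :
  orthonormal u w -> alpha U u <> Inf ->
  exists X, In X U /\ forall y, In y X -> ip y u < 0 \/ (line u y /\ ip y w < 0).
Proof.
  intros Huw Hfin; apply NNPP; intros Hno; apply Hfin, (alpha_inf U u w Huw).
  intros X HX; apply NNPP; intros Hnone; apply Hno; exists X; split; [exact HX|].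
  intros y Hy; destruct (Rtotal_order (ip y u) 0) as [Hneg|[Hzero|Hpos]].
  - left; exact Hneg.
  - destruct (Rlt_or_le (ip y w) 0) as [Hw|Hw]; [right; split; assumption|].
    exfalso; apply Hnone; exists y; split; [|right; split]; assumption.
  - exfalso; apply Hnone; exists y; split; [|left]; assumption.
Qed.

Lemma tilt_into_halfplane u v X :
  orthonormal u v ->
  (forall y, In y X -> ip y u < 0 \/ (line u y /\ 0 < ip y v)) ->
  exists r, 0 < r /\ forall t, dot t v < 0 -> 0 <= dot t v + r * dot t u ->
    forall y, In y X -> ip y t < 0.
Proof.
  intros Huv HX.
  destruct (uniform_scale_below X (fun y => ip y v) (fun y => - ip y u)) as [r [Hr Hsmall]].
  exists r; split; [exact Hr|]; intros t Htv Htu y Hy.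
  assert (Ha : 0 < dot t u) by nra.
  rewrite ip_dot, (dot_expand u v t (vec y) Huv), <- !ip_dot.
  destruct (HX y Hy) as [Hyu|[Hyu Hyv]].
  - specialize (Hsmall y Hy); simpl in Hsmall.
    assert (Hb : r * Rabs (ip y v) < - ip y u) by (apply Hsmall; lra).
    pose proof (Rle_abs (- ip y v)) as Habs; rewrite Rabs_Ropp in Habs.
    pose proof (Rabs_pos (ip y v)).
    assert (dot t v * ip y v <= - dot t v * Rabs (ip y v)) by nra.
    assert (- dot t v * Rabs (ip y v) <= r * dot t u * Rabs (ip y v)) by nra.
    nra.
  - unfold line in Hyu; rewrite Hyu; nra.
Qed.

Lemma alpha_endpoint_gt U k u v :
  orthonormal u v ->
  (forall t, open_semicircle v t -> ele (alpha U t) (Fin k)) ->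
  ~ (exists v', on_circle v' /\ forall t, closed_semicircle v' t -> ele (alpha U t) (Fin k)) ->
  ele (Fin (S k)) (alpha U u).
Proof.
  intros Huv Hopen Hnb.
  destruct (alpha U u) as [m|] eqn:Hm; [simpl|exact I].
  destruct (le_lt_dec (S k) m) as [|Hmk]; [assumption|exfalso].
  destruct (alpha_finite_rule U u (dneg v)) as [X [HXU HX]];
    [apply orthonormal_dneg_r; exact Huv|rewrite Hm; discriminate|].
  destruct (tilt_into_halfplane u v X Huv) as [r [Hr Htilt]].
  { intros y Hy; destruct (HX y Hy) as [Hyu|[Hyu Hyv]]; [left; exact Hyu|].
    rewrite ip_dneg in Hyv; right; split; [exact Hyu|lra]. }
  destruct (normalize_dir (dcomb 1 v r u)) as [v' [Hv' Hsame]].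
  { rewrite (parseval u v _ Huv), (dot_comm _ v), dot_dcomb.
    destruct Huv as [_ [Hv Huv]]; change (dot v v = 1) in Hv.
    rewrite Hv, (dot_comm v u), Huv; nra. }
  apply Hnb; exists v'; split; [exact Hv'|]; intros t [Ht Htv'].
  apply Hsame in Htv'; rewrite dot_dcomb in Htv'.
  destruct (Rtotal_order (dot t v) 0) as [Hneg|[Hzero|Hpos]].
  - rewrite (alpha_zero U X t Ht HXU (Htilt t Hneg ltac:(lra))); simpl; lia.
  - assert (Htu : dot t u = 1).
    { change (dot t t = 1) in Ht; rewrite (parseval u v _ Huv), Hzero in Ht; nra. }
    assert (t = u) as ->.
    { rewrite (orthonormal_expand u v t Huv), Htu, Hzero.
      destruct u; unfold dcomb; simpl; f_equal; ring. }
    rewrite Hm; simpl; lia.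
  - apply Hopen; split; [exact Ht|lra].
Qed.

Theorem mainTheorem4 (U : list (list site)) :
  update_family U -> critical U -> unbalanced U ->
  exists u : dir, on_circle u /\
    ele (esucc (alpha_fam U)) (emin (alpha U u) (alpha U (dneg u))).
Proof.
  intros _ _ Hunb.
  destruct (alpha_fam U) as [k|] eqn:Hk.
  - assert (Hnb : ~ exists v', on_circle v' /\
                    forall t, closed_semicircle v' t -> ele (alpha U t) (Fin k))
      by (intros Hb; apply Hunb; unfold balanced; rewrite Hk; exact Hb).
    unfold alpha_fam in Hk; destruct (least_fin _ _ Hk) as [v [Hv Hopen]].
    assert (Hu : orthonormal (right_of v) v)
      by (apply orthonormal_sym, orthonormal_right_of; exact Hv).
    exists (right_of v); split; [apply Hu|].
    apply emin_ge; apply (alpha_endpoint_gt U k _ v); auto.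
    apply orthonormal_sym, orthonormal_dneg_r, orthonormal_sym; exact Hu.
  - exfalso; apply Hunb; exists (1, 0); split; [unfold on_circle; simpl; ring|].
    intros u _; rewrite Hk; destruct (alpha U u); exact I.
Qed.
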